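(* Let $\mathbf A$ be the Płonka sum of a semilattice directed system of metamorphisms $\{\xi_{pq}:\mathbf A_p\Rightarrow\mathbf A_q: p\preceq q\text{ in }\mathbf I\}$ between algebras of a finite type $\tau$ (with $\mathbf I$ having a least element if $\tau$ contains constants). Then $\mathbf A$ is locally finite if and only if every $\mathbf A_p$ ($p\in I$) is locally finite.
   Context: An algebra is locally finite if every finitely generated subalgebra is finite. A metamorphism $f:\mathbf A\Rightarrow\mathbf B$ between algebras of type $\tau$ assigns to each $n$-ary symbol $\sigma$ maps $f^{\sigma0},\dots,f^{\sigma n}:A\to B$ with $f^{\sigma0}(\sigma^{\mathbf A}(a_1,\dots,a_n))=\sigma^{\mathbf B}(f^{\sigma1}(a_1),\dots,f^{\sigma n}(a_n))$ (for constants $f^{\omega0}(\omega^{\mathbf A})=\omega^{\mathbf B}$); composition and identity are componentwise. A semilattice directed system of metamorphisms over a join-semilattice $\mathbf I=\langle I,\vee\rangle$ (order $\preceq$) is a family of pairwise disjoint algebras $\mathbf A_p$ of type $\tau$ with metamorphisms $\xi_{pq}:\mathbf A_p\Rightarrow\mathbf A_q$ for $p\preceq q$, $\xi_{pp}$ the identity, $\xi_{qr}\circ\xi_{pq}=\xi_{pr}$. Its Płonka sum is the algebra on $\biguplus_pA_p$ with $\sigma(a_1,\dots,a_n):=\sigma^{\mathbf A_q}(\xi^{\sigma1}_{p_1q}(a_1),\dots,\xi^{\sigma n}_{p_nq}(a_n))$ for $a_i\in A_{p_i}$, $q=p_1\vee\dots\vee p_n$, and $\omega:=\omega^{\mathbf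 A_\bot}$ for each constant $\omega$, where $\bot$ is the least element of $\mathbf I$. *)

From Stdlib Require List.
From mathcomp Require Import all_boot all_order.
Set Implicit Arguments. Unset Strict Implicit. Unset Printing Implicit Defensive.
Import Order.TTheory.
Local Open Scope order_scope.

(* A type tau: finite set of symbols [sym] with arities [ar].  An algebra of
   type tau on carrier T: for each symbol an [ar s]-ary operation. *)
Definition op_family (sym : Type) (ar : sym -> nat) (T : Type) :=
  forall s : sym, ('I_(ar s) -> T) -> T.

(* Components of a metamorphism: for symbol s, index 0 is f^{s0}, index
   lift ord0 i (value i+1) is f^{s(i+1)}. *)
Definition meta_maps (sym : Type) (ar : sym -> nat) (T U : Type) :=
  forall s : sym, 'I_(ar s).+1 -> T -> U.

Definition is_metamorphism (sym : Type) (ar : sym -> nat) (T U : Type)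
  (opT : op_family ar T) (opU : op_family ar U) (f : meta_maps ar T U) : Prop :=
  forall s (args : 'I_(ar s) -> T),
    f s ord0 (opT s args) = opU s (fun i => f s (lift ord0 i) (args i)).

Definition op_closed (sym : Type) (ar : sym -> nat) (T : Type)
  (op : op_family ar T) (S : T -> Prop) : Prop :=
  forall s (args : 'I_(ar s) -> T), (forall i, S (args i)) -> S (op s args).

Definition generated (sym : Type) (ar : sym -> nat) (T : Type)
  (op : op_family ar T) (X : T -> Prop) (x : T) : Prop :=
  forall S : T -> Prop, op_closed op S -> (forall y, X y -> S y) -> S x.

Definition locally_finite (sym : Type) (ar : sym -> nat) (T : Type)
  (op : op_family ar T) : Prop :=
  forall gens : seq T, exists elts : seq T,
    forall x, generated op (fun y => List.In y gens) x -> List.In x elts.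

(* Semilattice directed system of metamorphisms over I (order p <= q).
   xi p q is only constrained for p <= q. *)
Definition directed_system (sym : Type) (ar : sym -> nat)
  (d : Order.disp_t) (I : joinSemilatticeType d) (A : I -> Type)
  (alg : forall p, op_family ar (A p)) (xi : forall p q, meta_maps ar (A p) (A q))
  : Prop :=
  [/\ (forall p q, p <= q -> is_metamorphism (alg p) (alg q) (xi p q)),
      (forall p s i (x : A p), xi p p s i x = x) &
      (forall p q r, p <= q -> q <= r ->
         forall s i (x : A p), xi q r s i (xi p q s i x) = xi p r s i x)].

Fixpoint joinl (d : Order.disp_t) (I : joinSemilatticeType d) (x : I) (l : seq I) : I :=
  match l with [::] => x | y :: l' => joinl (Order.join x y) l' end.

Lemma joinl_ge_init (d : Order.disp_t) (I : joinSemilatticeType d) (l : seq I) :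
  forall x y : I, y <= x -> y <= joinl x l.
Proof.
elim: l => [//|z l IH] x y le_yx /=; apply: IH.
exact: le_trans le_yx (leUl x z).
Qed.

Lemma joinl_ge (d : Order.disp_t) (I : joinSemilatticeType d) (l : seq I) :
  forall (x y : I), y \in l -> y <= joinl x l.
Proof.
elim: l => [//|z l IH] x y /=; rewrite in_cons => /orP [/eqP -> | yl].
  by apply: joinl_ge_init; exact: leUr.
exact: IH.
Qed.

Definition ord_absurd (n : nat) (h : n = 0) (i : 'I_n) : False.
Proof. by case: i => m; rewrite h. Qed.

Section Plonka.
Variables (sym : Type) (ar : sym -> nat) (d : Order.disp_t) (I : joinSemilatticeType d)
  (A : I -> Type) (alg : forall p, op_family ar (A p))
  (xi : forall p q, meta_maps ar (A p) (A q)) (bot : forall s, ar s = 0 -> I).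

Definition plonka_index (s : sym) (args : 'I_(ar s) -> {p : I & A p}) (n : nat)
  (h : ar s = n.+1) : I :=
  let i0 : 'I_(ar s) := Ordinal (eq_ind_r (fun k => 0 < k) (ltn0Sn n) h) in
  joinl (projT1 (args i0)) [seq projT1 (args i) | i <- enum 'I_(ar s)].

Definition plonka_op : op_family ar {p : I & A p} :=
  fun s =>
  match ar s as n return (ar s = n -> ('I_(ar s) -> {p : I & A p}) -> {p : I & A p}) with
  | 0 => fun h _ =>
      existT A (@bot s h) (@alg (@bot s h) s (fun i => False_rect _ (ord_absurd h i)))
  | n.+1 => fun h args =>
      let q := plonka_index args h in
      existT A q (@alg q s (fun i => @xi (projT1 (args i)) q s (lift ord0 i) (projT2 (args i))))
  end erefl.
End Plonka.

From mathcomp Require Import all_boot all_order.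
From Stdlib Require Import Eqdep_dec FunctionalExtensionality.
Import Order.TTheory.
Local Open Scope order_scope.

(* Forward: a finitely generated subalgebra of A_p lies in the fibre over p of the
   subalgebra of the Plonka sum generated by the same generators and the constants
   of A_p, placed over p.
   Backward: let P be the indices of the generators together with those of the
   constants.  Every element of the generated subalgebra lies over the join of the
   elements of P below its index, so only finitely many indices q occur.  Over q, the
   generated elements lie in the subalgebra of A_q generated by the generators over q
   and the xi-images of generated elements over indices strictly below q; by
   induction along the indices this generating set is finite, and A_q is locally
   finite. *)

Definition finite_pred (T : Type) (P : T -> Prop) : Prop :=
  exists s : seq T, forall x, P x -> List.In x s.
Arguments finite_pred {T} P.

Section FinitePred.
Context {T U : Type}.

Lemma sub_finite_pred {P Q : T -> Prop} :
  (forall x, P x -> Q x) -> finite_pred Q -> finite_pred P.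
Proof. by move=> PQ [s Qs]; exists s => x /PQ /Qs. Qed.

Lemma finite_predU {P Q : T -> Prop} :
  finite_pred P -> finite_pred Q -> finite_pred (fun x => P x \/ Q x).
Proof.
move=> [s Ps] [t Qt]; exists (s ++ t) => x Px.
by apply: List.in_or_app; case: Px => [/Ps|/Qt]; [left|right].
Qed.

Lemma finite_pred_image {f : T -> U} {P : T -> Prop} :
  finite_pred P -> finite_pred (fun y => exists x, P x /\ y = f x).
Proof. by move=> [s Ps]; exists (List.map f s) => _ [x [/Ps xs ->]]; exact: List.in_map. Qed.

Lemma finite_pred_bigcup {K : eqType} {l : seq K} {P : K -> T -> Prop} :
  (forall k, k \in l -> finite_pred (P k)) ->
  finite_pred (fun x => exists2 k, k \in l & P k x).
Proof.
elim: l => [|k l IH] finP; first by exists [::] => x [].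
have finl : finite_pred (fun x => exists2 k', k' \in l & P k' x).
  by apply: IH => k' k'l; apply: finP; rewrite in_cons k'l orbT.
apply: sub_finite_pred (finite_predU (finP k (mem_head k l)) finl) => x [k'].
by rewrite in_cons => /orP [/eqP -> | k'l]; [left | right; exists k'].
Qed.

Lemma finite_pred_exists {K : finType} {P : K -> T -> Prop} :
  (forall k, finite_pred (P k)) -> finite_pred (fun x => exists k, P k x).
Proof.
move=> finP; apply: sub_finite_pred (finite_pred_bigcup (l := enum K) (fun k _ => finP k)).
by move=> x [k Pkx]; exists k; rewrite ?mem_enum.
Qed.

End FinitePred.

Lemma In_mem (T : eqType) (x : T) (s : seq T) : List.In x s -> x \in s.
Proof. by elim: s => [//|y s IH] /= [-> | /IH]; rewrite in_cons ?eqxx // => ->; rewrite orbT. Qed.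

Lemma finite_pred_fiber {I : eqType} {A : I -> Type} {q : I} {P : {p : I & A p} -> Prop} :
  finite_pred P -> finite_pred (fun y => P (existT A q y)).
Proof.
move=> [s Ps].
pose fiber e : seq (A q) :=
  if projT1 e =P q is ReflectT h then [:: eq_rect _ A (projT2 e) _ h] else [::].
exists (List.flat_map fiber s) => y Py; apply/List.in_flat_map.
exists (existT A q y); split; first exact: Ps.
by rewrite /fiber /=; case: eqP => // h; rewrite (eq_irrelevance h erefl); left.
Qed.

Lemma existT_inj {I : eqType} {A : I -> Type} {q : I} {x y : A q} :
  existT A q x = existT A q y -> x = y.
Proof. exact: (inj_pair2_eq_dec _ (@eq_comparable I)). Qed.

Section Generated.
Context {sym : Type} {ar : sym -> nat} {T : Type} {op : op_family ar T}.

Lemma generated_base {X : T -> Prop} {x} : X x -> generated op X x.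
Proof. by move=> Xx S _; apply. Qed.

Lemma generated_op {X : T -> Prop} {s args} :
  (forall i, generated op X (args i)) -> generated op X (op s args).
Proof. by move=> gen_args S closedS XS; apply: (closedS s args) => i; exact: gen_args. Qed.

Lemma generated_mono {X Y : T -> Prop} {x} :
  (forall y, X y -> Y y) -> generated op X x -> generated op Y x.
Proof. by move=> XY genx S closedS YS; apply: genx => // y /XY /YS. Qed.

Lemma finite_generated {X : T -> Prop} :
  locally_finite op -> finite_pred X -> finite_pred (generated op X).
Proof.
move=> lf [s Xs]; have [t st] := lf s.
by exists t => x /(generated_mono Xs) /st.
Qed.

End Generated.

Definition constants {sym : Type} {ar : sym -> nat} {T : Type} (op : op_family ar T) : T -> Prop :=
  fun x => exists s, exists args : 'I_(ar s) -> T, ar s = 0 /\ x = op s args.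

Lemma finite_constants {sym : finType} {ar : sym -> nat} {T : Type} (op : op_family ar T) :
  finite_pred (constants op).
Proof.
apply: finite_pred_exists => s; case: (ar s =P 0) => [h|nh]; last first.
  by exists [::] => x [args [/nh]].
exists [:: op s (fun i => False_rect _ (ord_absurd h i))] => x [args [_ ->]]; left.
by congr (op s); apply: functional_extensionality => i; case: (ord_absurd h i).
Qed.

Section Joins.
Context {d : Order.disp_t} {I : joinSemilatticeType d}.
Implicit Types (P : seq I) (p q u x y : I).

Lemma joinl_le P x u : x <= u -> {in P, forall y, y <= u} -> joinl x P <= u.
Proof.
elim: P x => [//|z P IH] x xu Pu /=.
apply: IH => [|y yP]; last by rewrite Pu // in_cons yP orbT.
by rewrite leUx xu Pu ?mem_head.
Qed.

Lemma joinl_ge_cons P x y : y \in x :: P -> y <= joinl x P.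
Proof. by rewrite in_cons => /orP [/eqP -> | /joinl_ge //]; apply: joinl_ge_init. Qed.

Lemma joinlUl P x y : joinl (x `|` y) P = x `|` joinl y P.
Proof. by elim: P x y => [//|z P IH] x y /=; rewrite -joinA IH. Qed.

Fixpoint subseq_joins P : seq I :=
  if P is p :: P' then p :: [seq p `|` q | q <- subseq_joins P'] ++ subseq_joins P' else [::].

Lemma joinl_filter_subseq_joins {a : pred I} {P x P'} :
  filter a P = x :: P' -> joinl x P' \in subseq_joins P.
Proof.
elim: P x P' => [//|p P IH] x P' /=; case: (a p) => [[<- <-] | /IH]; last first.
  by rewrite in_cons mem_cat => ->; rewrite !orbT.
case E: (filter a P) => [|y P'']; first exact: mem_head.
by rewrite /= joinlUl in_cons mem_cat map_f ?orbT ?(IH _ _ E).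
Qed.

Definition spanned_by P q : Prop :=
  (exists2 p, p \in P & p <= q) /\ (forall u, {in P, forall p, p <= q -> p <= u} -> q <= u).

Lemma spanned_by_mem P p : p \in P -> spanned_by P p.
Proof. by move=> pP; split=> [|u]; [exists p | apply]. Qed.

Lemma spanned_by_lub {P} {J : Type} (j0 : J) {f : J -> I} {q} :
  (forall j, spanned_by P (f j)) -> (forall j, f j <= q) ->
  (forall u, (forall j, f j <= u) -> q <= u) -> spanned_by P q.
Proof.
move=> span fq q_lub; split.
  by have [[p pP pf] _] := span j0; exists p; last exact: le_trans pf (fq j0).
move=> u Pu; apply: q_lub => j; apply: (span j).2 => p pP pf.
by apply: Pu; last exact: le_trans pf (fq j).
Qed.

Lemma spanned_by_subseq_joins P q : spanned_by P q -> q \in subseq_joins P.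
Proof.
move=> [[p pP pq] q_lub]; have: p \in filter (<= q) P by rewrite mem_filter pP andbT.
case E: (filter (<= q) P) => [//|x P'] _.
suff -> : q = joinl x P' by exact: joinl_filter_subseq_joins E.
have /allP le_q : all (<= q) (x :: P') by rewrite -E filter_all.
apply/le_anti/andP; split.
  by apply: q_lub => y yP yq; apply: joinl_ge_cons; rewrite -E mem_filter yP andbT.
by apply: joinl_le => [|y yP']; apply: le_q; rewrite in_cons ?eqxx ?yP' ?orbT.
Qed.

End Joins.

Lemma count_lt_mono {d : Order.disp_t} {T : porderType d} {s : seq T} {p q : T} :
  p \in s -> p < q -> (count (< p) s < count (< q) s)%N.
Proof.
move=> ps pq; have := count_predUI (< p) (pred1 p) s.
have -> : count (predI (< p) (pred1 p)) s = 0%N.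
  rewrite -(count_pred0 s); apply: eq_count => x /=.
  by case: eqP => [->|_]; rewrite ?ltxx ?andbF.
have p_pos : (0 < count (pred1 p) s)%N by rewrite -has_count has_pred1.
move=> E; apply: leq_trans (_ : count (predU (< p) (pred1 p)) s <= _)%N.
  by rewrite -(addn0 (count (predU _ _) s)) E -[X in (X < _)%N]addn0 ltn_add2l.
by apply: sub_count => x /orP [xp | /eqP ->]; [exact: lt_trans xp pq | exact: pq].
Qed.

Section PlonkaOp.
Context {sym : Type} {ar : sym -> nat} {d : Order.disp_t} {I : joinSemilatticeType d}
  {A : I -> Type} (alg : forall p, op_family ar (A p))
  (xi : forall p q, meta_maps ar (A p) (A q)) (bot : forall s, ar s = 0 -> I).

Variant plonka_op_spec (s : sym) (args : 'I_(ar s) -> {p : I & A p}) :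
  {p : I & A p} -> Prop :=
| PlonkaNullary (h : ar s = 0) (c : 'I_(ar s) -> A (bot s h)) :
    plonka_op_spec s args (existT A (bot s h) (alg (bot s h) s c))
| PlonkaJoin (r : I) of (0 < ar s)%N
    & (forall i, projT1 (args i) <= r)
    & (forall u, (forall i, projT1 (args i) <= u) -> r <= u) :
    plonka_op_spec s args
      (existT A r (alg r s (fun i => xi (projT1 (args i)) r s (lift ord0 i) (projT2 (args i))))).

Lemma plonka_opP s args : plonka_op_spec s args (plonka_op alg xi bot args).
Proof.
rewrite /plonka_op; move: (erefl (ar s)).
case: {2 3}(ar s) => [|n] h; first exact: PlonkaNullary.
apply: PlonkaJoin => [|i|u ub]; first by rewrite h.
  by apply: joinl_ge; rewrite map_f ?mem_enum.
by apply: joinl_le => [|_ /mapP [i _ ->]]; apply: ub.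
Qed.

End PlonkaOp.

Section PlonkaSum.
Context {sym : finType} {ar : sym -> nat} {d : Order.disp_t} {I : joinSemilatticeType d}
  {A : I -> Type} {alg : forall p, op_family ar (A p)}
  {xi : forall p q, meta_maps ar (A p) (A q)} {bot : forall s, ar s = 0 -> I}.
Hypothesis xi_id : forall p s i (x : A p), xi p p s i x = x.

Local Notation T := {p : I & A p}.
Local Notation plonka := (plonka_op alg xi bot).

Lemma plonka_fiber_closed p (X : T -> Prop) :
  (forall x, constants (alg p) x -> X (existT A p x)) ->
  op_closed (alg p) (fun x => generated plonka X (existT A p x)).
Proof.
move=> constX s args gen_args; case: (posnP (ar s)) => [h | ar_pos].
  by apply: generated_base; apply: constX; exists s, args.
have := generated_op gen_args.
case: (plonka_opP alg xi bot s (fun i => existT A p (args i))) => [h | r _ le_r r_lub].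
  by rewrite h in ar_pos.
have -> : r = p by apply/le_anti; rewrite r_lub // (le_r (Ordinal ar_pos)).
congr (generated _ _ (existT A p (alg p s _))).
by apply: functional_extensionality => i; apply: xi_id.
Qed.

Lemma locally_finite_component :
  locally_finite plonka -> forall p, locally_finite (alg p).
Proof.
move=> lf p gens.
pose X e := exists x, (List.In x gens \/ constants (alg p) x) /\ e = existT A p x.
have finX : finite_pred X.
  apply: finite_pred_image; apply: finite_predU; last exact: finite_constants.
  by exists gens.
apply: sub_finite_pred (finite_pred_fiber (finite_generated lf finX)) => x gen_x.
apply: (gen_x (fun y => generated plonka X (existT A p y))) => [|y gens_y].
  by apply: plonka_fiber_closed => y const_y; exists y; split; first right.
by apply: generated_base; exists y; split; first left.
Qed.

Definition nullary_indices : seq I :=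
  pmap (fun s => if ar s =P 0 is ReflectT h then Some (bot s h) else None) (enum sym).

Lemma bot_nullary_indices s (h : ar s = 0) : bot s h \in nullary_indices.
Proof.
rewrite mem_pmap; apply/mapP; exists s; rewrite ?mem_enum //.
by case: eqP => [h'|]; [rewrite (eq_irrelevance h' h) | rewrite h].
Qed.

Section Generators.
Variable gens : seq T.

Local Notation gen := (generated plonka (fun e => List.In e gens)).
Local Notation indices := (List.map (@projT1 _ _) gens ++ nullary_indices).

Lemma generated_index_spanned e : gen e -> spanned_by indices (projT1 e).
Proof.
move=> gen_e; apply: (gen_e (fun e => spanned_by indices (projT1 e)))
  => [s args span_args | e' gens_e].
  case: (plonka_opP alg xi bot s args) => [h c | r ar_pos le_r r_lub].
    by apply: spanned_by_mem; rewrite mem_cat bot_nullary_indices orbT.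
  exact: (spanned_by_lub (Ordinal ar_pos) span_args le_r r_lub).
by apply: spanned_by_mem; rewrite mem_cat In_mem ?orTb //; apply: List.in_map.
Qed.

Lemma generated_index_subseq_joins e : gen e -> projT1 e \in subseq_joins indices.
Proof. by move=> /generated_index_spanned /spanned_by_subseq_joins. Qed.

Definition level_gens q (L : T -> Prop) : A q -> Prop := fun z =>
  List.In (existT A q z) gens \/
  exists s (i : 'I_(ar s)), exists e, L e /\ z = xi (projT1 e) q s (lift ord0 i) (projT2 e).

Lemma level_generated q (L : T -> Prop) :
  (forall e, gen e -> projT1 e < q -> L e) ->
  forall y, gen (existT A q y) -> generated (alg q) (level_gens q L) y.
Proof.
move=> lowL y gen_y.
suff /(_ _ gen_y) [_ /(_ y erefl)] : forall e, gen e ->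
    gen e /\ forall y, e = existT A q y -> generated (alg q) (level_gens q L) y by [].
move=> e gen_e; apply: (gen_e (fun e => gen e /\
  forall y, e = existT A q y -> generated (alg q) (level_gens q L) y))
  => [s args IH | e' gens_e]; last first.
  by split=> [|y' E]; apply: generated_base => //; left; rewrite -E.
split; first by apply: generated_op => i; case: (IH i).
case: (plonka_opP alg xi bot s args) => [h c | r _ le_r _] y' E.
  move: (bot s h) c E => b c E; have /= bq := f_equal (@projT1 _ _) E; subst b.
  rewrite -(existT_inj E).
  by apply: generated_op => i; case: (ord_absurd h i).
have /= rq := f_equal (@projT1 _ _) E; subst r.
rewrite -(existT_inj E); apply: generated_op => i.
move: (le_r i) (IH i); case: (args i) => p x /= le_pq [gen_x IHx].
have [epq | neq_pq] := eqVneq p q; first by subst p; rewrite xi_id; exact: IHx.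
apply: generated_base; right; exists s, i, (existT A p x); split => //.
by apply: lowL gen_x _; rewrite lt_neqAle neq_pq le_pq.
Qed.

Hypothesis lf_alg : forall p, locally_finite (alg p).

Lemma finite_level {q} :
  q \in subseq_joins indices -> finite_pred (fun y => gen (existT A q y)).
Proof.
set Q := subseq_joins indices.
(* Induction on the number of elements of Q strictly below q. *)
move: {2}(count (< q) Q).+1 (ltnSn (count (< q) Q)) => n.
elim: n q => [//|n IH] q lt_q_n qQ.
pose L e := gen e /\ projT1 e < q.
have finL : finite_pred L.
  pose lower p e := p < q /\ exists y, gen (existT A p y) /\ e = existT A p y.
  apply: sub_finite_pred (finite_pred_bigcup (l := Q) (P := lower) _).
    move=> [p y] [gen_y /= lt_pq]; exists p; first exact: generated_index_subseq_joins gen_y.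
    by split=> //; exists y.
  move=> p pQ; case: (boolP (p < q)) => [lt_pq | ge_pq]; last first.
    by exists [::] => e [/(negP ge_pq)].
  have /IH fin_p : (count (< p) Q < n)%N.
    by rewrite ltnS in lt_q_n; exact: leq_trans (count_lt_mono pQ lt_pq) lt_q_n.
  by apply: sub_finite_pred (finite_pred_image (f := existT A p) (fin_p pQ)) => e [_].
apply: sub_finite_pred (finite_generated (X := level_gens q L) (lf_alg q) _) => [y|].
  by apply: level_generated => e; split.
apply: finite_predU; first exact: finite_pred_fiber (ex_intro _ gens (fun _ h => h)).
by do 2!apply: finite_pred_exists => ?; apply: finite_pred_image.
Qed.

Lemma finite_generated_plonka : finite_pred gen.
Proof.
pose at_level q e := exists y, gen (existT A q y) /\ e = existT A q y.
apply: sub_finite_pred (finite_pred_bigcup (P := at_level)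
  (fun q qQ => finite_pred_image (f := existT A q) (finite_level qQ))) => -[q y] gen_y.
by exists q; [exact: generated_index_subseq_joins gen_y | exists y].
Qed.

End Generators.

End PlonkaSum.

Theorem theorem4p7 (sym : finType) (ar : sym -> nat)
  (d : Order.disp_t) (I : joinSemilatticeType d) (A : I -> Type)
  (alg : forall p, op_family ar (A p))
  (xi : forall p q, meta_maps ar (A p) (A q))
  (bot : forall s, ar s = 0 -> I)
  (hbot : forall s (h : ar s = 0) (p : I), (bot s h <= p)%O)
  (hsys : directed_system alg xi) :
  locally_finite (plonka_op alg xi bot) <-> (forall p : I, locally_finite (alg p)).
Proof.
(* [hbot] is not needed: the indices of the constants are simply added to the
   finite set spanning the indices of generated elements. *)
have [_ xi_id _] := hsys.
split=> [|lf_alg gens]; first exact: locally_finite_component xi_id.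
exact: finite_generated_plonka xi_id gens lf_alg.
Qed.
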